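(* Let $k\ge 1$ be an integer and let $T$ be the complete rooted tree with root $r$ and depth $k$ in which every internal node has exactly $k^4$ children. Assign to each edge $e$ of $T$ an independent arrival time $r_e$ uniform on $[0,1]$. Then with probability at least $1-\frac{2k^{2k}}{e^{k^3/8}}$ there exists a bad subtree of $T$.
   Context: The height of a node $u$ of $T$ is the number of edges between $u$ and a closest leaf (so leaves have height $0$ and $r$ has height $k$). A child edge of $u$ is an edge from $u$ to one of its children. For $h=1,\dots,k$ let $I_h=((h-1)/k,\,h/k)$. A non-leaf node $u$ of height $h$ is bad if at least $k^2$ of its child edges $e$ have arrival time $r_e\in I_h$. A bad subtree is a subtree $T'$ of $T$ containing the root $r$ that is a full $k^2$-ary tree of height $k$ (every internal node of $T'$ has exactly $k^2$ children in $T'$, which are children in $T$, and all leaves of $T'$ are leaves of $T$) and all of whose internal nodes are bad. *)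

From HB Require Import structures.
From mathcomp Require Import all_boot all_order all_algebra.
From mathcomp Require Import all_classical all_reals all_analysis.
Set Implicit Arguments. Unset Strict Implicit. Unset Printing Implicit Defensive.
Import Order.TTheory GRing.Theory Num.Theory.
Local Open Scope classical_set_scope.
Local Open Scope ring_scope.

(* A node is encoded by the path from it up to the root: a sequence
   [:: i_d; ...; i_1] of child indices in 'I_(k^4), the root being [::].
   The children of u are the (i :: u), i : 'I_(k^4); the depth of u is
   size u, and the nodes of T are the u with size u <= k.
   Since T is complete, all leaves are at depth k, so the height of u
   (distance to the closest leaf) is k - size u.
   Each edge of T is identified with its child endpoint v, so the edges
   of T are the v with 1 <= size v <= k. *)

Definition node (k : nat) := seq 'I_(k ^ 4).

Definition is_edge (k : nat) (v : node k) : bool := (0 < size v <= k)%N.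

Definition height (k : nat) (u : node k) : nat := (k - size u)%N.

Definition in_I {R : realType} (k h : nat) (x : R) : bool :=
  ((h%:R - 1) / k%:R < x) && (x < h%:R / k%:R).

Definition bad {R : realType} (k : nat) (a : node k -> R) (u : node k) : Prop :=
  (size u < k)%N /\
  (k ^ 2 <= #|[pred i : 'I_(k ^ 4) | @in_I R k (@height k u) (a (i :: u))]|)%N.

(* S (a set of nodes of T) is (the node set of) a bad subtree:
   a subtree containing the root (nodes of T, contains the root, closed under
   taking parents, hence connected), in which every node of depth < k
   (i.e. every node that is not a leaf of T) has exactly k^2 children in S and
   is bad.  Then S is a full k^2-ary tree of height k all of whose leaves are
   leaves of T, and all of whose internal nodes are bad. *)
Definition bad_subtree {R : realType} (k : nat) (a : node k -> R)
    (S : node k -> bool) : Prop :=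
  [/\ S [::],
      (forall u, S u -> (size u <= k)%N),
      (forall (i : 'I_(k ^ 4)) u, S (i :: u) -> S u) &
      (forall u, S u -> (size u < k)%N ->
         #|[pred i : 'I_(k ^ 4) | S (i :: u)]| = (k ^ 2)%N /\ @bad R k a u)].

Definition edges_independent d (T : measurableType d) (R : realType)
    (P : probability T R) (k : nat) (r : node k -> {RV P >-> R}) : Prop :=
  forall (s : seq (node k)), uniq s -> all (@is_edge k) s ->
  forall (B : node k -> set R), (forall e, measurable (B e)) ->
    P (\bigcap_(e in [set` s]) (r e @^-1` B e)) =
    (\prod_(e <- s) P (r e @^-1` B e))%E.

Definition edges_uniform d (T : measurableType d) (R : realType)
    (P : probability T R) (k : nat) (r : node k -> {RV P >-> R}) : Prop :=
  forall e, is_edge e -> forall A : set R, measurable A ->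
    P (r e @^-1` A) = (@lebesgue_measure R) (A `&` [set x | 0 <= x <= 1]).

From HB Require Import structures.
From mathcomp Require Import all_boot all_order all_algebra.
From mathcomp Require Import all_classical all_reals all_analysis.
From mathcomp Require Import ring lra zify.
Import Order.TTheory GRing.Theory Num.Theory.
Local Open Scope classical_set_scope.
Local Open Scope ring_scope.

(* Let S0 be the subtree formed by the first k^2 children of every node.  It
   is a bad subtree unless one of its at most k^(2k) internal nodes u fails to
   be bad.  The k^4 child edges of u land in the window I_h independently with
   probability 1/k each, so u fails when fewer than k^2 of k^4 Bernoulli(1/k)
   trials succeed; exponential tilting bounds this probability by
   2^(k^2) (1 - 1/(2k))^(k^4) <= 2 e^(-k^3/8), and a union bound over the
   internal nodes of S0 concludes. *)

Lemma card_ord_ltn {n m : nat} : (m <= n)%N -> #|[pred i : 'I_n | (i < m)%N]| = m.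
Proof.
move=> le_mn; have widen_inj : injective (widen_ord le_mn).
  by move=> i j [] /val_inj.
rewrite -[RHS]card_ord -(card_imset _ widen_inj).
apply: eq_card => i; rewrite !inE; apply/idP/imsetP => [lt_im | [j _ ->]].
  by exists (Ordinal lt_im) => //; apply: val_inj.
by case: j.
Qed.

Section Words.
Context {X : eqType}.

Fixpoint words (A : seq X) (j : nat) : seq (seq X) :=
  if j is j'.+1 then [seq x :: u | x <- A, u <- words A j'] else [:: [::]].

Fixpoint short_words (A : seq X) (j : nat) : seq (seq X) :=
  if j is j'.+1 then words A j' ++ short_words A j' else [::].

Lemma size_words A j : size (words A j) = (size A ^ j)%N.
Proof. by elim: j => [|j IH] //=; rewrite size_allpairs IH expnS. Qed.

Lemma words_size A j u : u \in words A j -> size u = j.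
Proof.
elim: j u => [|j IH] u /=; first by rewrite inE => /eqP ->.
by case/allpairsP => -[x v] [_ /IH <- ->].
Qed.

Lemma mem_words A u : all (mem A) u -> u \in words A (size u).
Proof.
elim: u => [|x u IH] /=; first by rewrite inE.
by case/andP => Ax Au; apply: allpairs_f => //; apply: IH.
Qed.

Lemma short_words_size A j u : u \in short_words A j -> (size u < j)%N.
Proof.
elim: j => [|j IH] //=; rewrite mem_cat => /orP[/words_size -> //|/IH].
exact: ltnW.
Qed.

Lemma mem_short_words A j u :
  all (mem A) u -> (size u < j)%N -> u \in short_words A j.
Proof.
move=> Au; elim: j => [|j IH] //=; rewrite ltnS leq_eqVlt mem_cat.
by case/orP => [/eqP <-|/IH ->]; rewrite ?orbT ?mem_words.
Qed.

Lemma size_short_words A j :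
  (0 < size A)%N -> (size (short_words A j) <= j * size A ^ j.-1)%N.
Proof.
move=> A_gt0; elim: j => [|j IH] //=; rewrite size_cat size_words mulSn.
apply: leq_add => //; apply: leq_trans IH _; rewrite leq_mul2l.
by case: j => //= j; rewrite expnS leq_pmull ?orbT.
Qed.
End Words.

Section MeasureFacts.
Context {d : measure_display} {T : measurableType d} {R : realType}.

Lemma measurable_bigcup_countable (I : countType) (D : set I) (F : I -> set T) :
  (forall i, D i -> measurable (F i)) -> measurable (\bigcup_(i in D) F i).
Proof.
move=> mF; rewrite bigcup_mkcond; apply: countable_bigcupT_measurable => [|i].
  exact: countableP.
by case: ifPn => // /set_mem /mF.
Qed.

Lemma Boole_inequality_seq (mu : {measure set T -> \bar R}) {I : Type}
    (s : seq I) (Q : pred I) (F : I -> set T) :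
  (forall i, measurable (F i)) ->
  (mu (\big[setU/set0]_(i <- s | Q i) F i) <= \sum_(i <- s | Q i) mu (F i))%E.
Proof.
move=> mF; elim: s => [|i s IH]; first by rewrite !big_nil measure0.
rewrite !big_cons; case: ifP => // _.
apply: le_trans (measureU2 _ (mF i) (bigsetU_measurable _ (fun j _ => mF j))) _.
exact: leeD.
Qed.
End MeasureFacts.

(* Exponential tilting: halving the weight of every success costs a factor at
   most 2^m on outcomes with fewer than m successes, and the halved weights
   sum to (1 - p/2)^n. *)
Lemma binomial_lower_tail (R : numFieldType) (n m : nat) (p : R) :
  0 <= p <= 1 ->
  \sum_(f : {ffun 'I_n -> bool} | (#|[pred i | f i]| < m)%N)
     \prod_i (if f i then p else 1 - p) <= 2 ^+ m * (1 - p / 2) ^+ n.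
Proof.
case/andP => p_ge0 p_le1.
pose G (b : bool) := if b then p / 2 else 1 - p.
have G_ge0 b : 0 <= G b by case: b; rewrite /G ?divr_ge0 ?subr_ge0.
have tilt (f : {ffun 'I_n -> bool}) : \prod_i (if f i then p else 1 - p) =
    2 ^+ #|[pred i | f i]| * \prod_i G (f i).
  rewrite -prodr_const [\prod_(i in _) _]big_mkcond -big_split /=.
  apply: eq_bigr => i _.
  by rewrite inE /G; case: (f i); rewrite ?mul1r // mulrC divfK ?pnatr_eq0.
apply: (@le_trans _ _ (\sum_(f : {ffun 'I_n -> bool}) 2 ^+ m * \prod_i G (f i))).
  rewrite [X in _ <= X](bigID (fun f : {ffun 'I_n -> bool} =>
    (#|[pred i | f i]| < m)%N)) /= -[X in X <= _]addr0 lerD //; last first.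
    by apply: sumr_ge0 => f _; rewrite mulr_ge0 ?exprn_ge0 ?prodr_ge0.
  apply: ler_sum => f lt_fm; rewrite tilt ler_wpM2r ?prodr_ge0 //.
  by rewrite ler_weXn2l ?ler1n // ltnW.
rewrite -mulr_sumr -(bigA_distr_bigA (fun _ : 'I_n => G)) /=.
rewrite prodr_const card_ord big_bool /G /=.
suff -> : p / 2 + (1 - p) = 1 - p / 2 by [].
by field.
Qed.

Lemma expR_ge1Dx_exprn (R : realType) (n : nat) (x : R) :
  -1 <= x -> (1 + x) ^+ n <= expR (n%:R * x).
Proof.
move=> x_ge; rewrite expRM_natl; apply: lerXn2r; rewrite ?nnegrE ?expR_ge0 //.
  by rewrite -lerBlDl sub0r.
exact: expR_ge1Dx.
Qed.

(* Integrality matters: the real inequality fails near k = 16/9. *)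
Lemma sq_pred_le_cube (k : nat) : (0 < k)%N -> (8 * (k ^ 2).-1 <= 3 * k ^ 3)%N.
Proof. by case: k => [|[|k]] // _; rewrite !expnS expn0 !muln1; nia. Qed.

Lemma node_failure_bound (R : realType) (k : nat) : (0 < k)%N ->
  2 ^+ (k ^ 2) * (1 - k%:R^-1 / 2) ^+ (k ^ 4) <= 2 * expR (- (k%:R ^+ 3 / 8)) :> R.
Proof.
move=> k_gt0; have k_pos : 0 < k%:R :> R by rewrite ltr0n.
have kinv_le1 : k%:R^-1 <= 1 :> R by rewrite invf_le1 // ler1n.
have kinv_ge0 : 0 <= k%:R^-1 :> R by rewrite invr_ge0 ltW.
have tail : (1 - k%:R^-1 / 2) ^+ (k ^ 4) <= expR (- (k%:R ^+ 3 / 2)) :> R.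
  have x_ge : -1 <= - (k%:R^-1 / 2) :> R by lra.
  apply: le_trans (@expR_ge1Dx_exprn R (k ^ 4) _ x_ge) _.
  suff -> : (k ^ 4)%:R * - (k%:R^-1 / 2) = - (k%:R ^+ 3 / 2) :> R by [].
  by rewrite natrX; field; rewrite gt_eqF.
have pow2 : 2 ^+ (k ^ 2) <= 2 * expR (3 / 8 * k%:R ^+ 3) :> R.
  have sq_gt0 : (0 < k ^ 2)%N by rewrite expn_gt0 k_gt0.
  rewrite -(prednK sq_gt0) exprS ler_wpM2l //.
  apply: (@le_trans _ _ (expR 1 ^+ (k ^ 2).-1)).
    by apply: lerXn2r; rewrite ?nnegrE ?expR_ge0 // -[2]/(1 + 1); apply: expR_ge1Dx.
  rewrite -expRM_natl mulr1 ler_expR.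
  have := sq_pred_le_cube _ k_gt0.
  by rewrite -(ler_nat R) natrM [X in _ <= X]natrM natrX; lra.
apply: le_trans (ler_pM _ _ pow2 tail) _; rewrite ?exprn_ge0 //; first lra.
by rewrite -[X in X <= _]mulrA -expRD ler_wpM2l // ler_expR; lra.
Qed.

Section Subtrees.
Variable k : nat.

Definition subtree_shape (S : node k -> bool) : Prop :=
  [/\ S [::], (forall u, S u -> (size u <= k)%N),
      (forall (i : 'I_(k ^ 4)) u, S (i :: u) -> S u) &
      (forall u, S u -> (size u < k)%N ->
         #|[pred i : 'I_(k ^ 4) | S (i :: u)]| = (k ^ 2)%N)].

Lemma bad_subtreeE {R : realType} (a : node k -> R) (S : node k -> bool) :
  bad_subtree a S <->
  subtree_shape S /\ (forall u, S u -> (size u < k)%N -> bad a u).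
Proof.
split=> [[S0 Sk Sp Sc] | [[S0 Sk Sp Sc] Sbad]].
  by split=> [|u Su uk]; [split=> // u Su uk | ]; case: (Sc u Su uk).
by split=> // u Su uk; split; [apply: Sc | apply: Sbad].
Qed.

Definition leftmost_children : seq 'I_(k ^ 4) :=
  enum [pred i : 'I_(k ^ 4) | (i < k ^ 2)%N].

Definition leftmost_subtree (u : node k) : bool :=
  (size u <= k)%N && all (mem leftmost_children) u.

Lemma leftmost_childrenE (i : 'I_(k ^ 4)) :
  (i \in leftmost_children) = (i < k ^ 2)%N.
Proof. by rewrite mem_enum. Qed.

Lemma k2_le_k4 : (k ^ 2 <= k ^ 4)%N.
Proof. by case: k => // k'; rewrite leq_pexp2l. Qed.

Lemma size_leftmost_children : size leftmost_children = (k ^ 2)%N.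
Proof. by rewrite -cardE card_ord_ltn // k2_le_k4. Qed.

Lemma leftmost_subtree_shape : subtree_shape leftmost_subtree.
Proof.
split=> // [u /andP[] // | i u | u /andP[_ small_u] uk].
  by case/andP=> /ltnW uk /andP[_ small_u]; rewrite /leftmost_subtree uk.
rewrite -[RHS](card_ord_ltn k2_le_k4); apply: eq_card => i.
by rewrite !inE /leftmost_subtree /= uk small_u leftmost_childrenE andbT.
Qed.

Lemma size_leftmost_internal : (0 < k)%N ->
  (size (short_words leftmost_children k) <= k ^ (2 * k))%N.
Proof.
move=> k_gt0; have := size_short_words leftmost_children k.
rewrite size_leftmost_children expn_gt0 k_gt0 => /(_ isT) /leq_trans; apply.
rewrite mulnC expnM -[X in (_ <= _ ^ X)%N](prednK k_gt0) (expnSr (k ^ 2)) leq_mul2l.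
by rewrite -[X in (X <= _)%N]expn1 leq_pexp2l ?orbT.
Qed.
End Subtrees.

Section Windows.
Context {R : realType} {k : nat}.

Lemma in_I_itv (h : nat) :
  [set x : R | in_I k h x] = [set` `](h%:R - 1) / k%:R, h%:R / k%:R[].
Proof. by apply/seteqP; split=> x; rewrite /= in_itv. Qed.

Lemma in_I_false (h : nat) :
  [set x : R | in_I k h x = false] = ~` [set x | in_I k h x].
Proof. by apply/seteqP; split=> x /=; case: in_I. Qed.

Lemma measurable_in_I (h : nat) (b : bool) :
  measurable [set x : R | in_I k h x = b].
Proof.
have window : measurable [set x : R | in_I k h x].
  by rewrite in_I_itv; exact: measurable_itv.
by case: b => //; rewrite in_I_false; exact: measurableC.
Qed.
End Windows.

Section RandomTree.
Context {d : measure_display} {T : measurableType d} {R : realType}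
  {P : probability T R} {k : nat} (r : node k -> {RV P >-> R}).

Definition profile (u : node k) (w : T) : {ffun 'I_(k ^ 4) -> bool} :=
  [ffun i => in_I k (height u) (r (i :: u) w)].

Definition pattern (u : node k) (f : {ffun 'I_(k ^ 4) -> bool}) : set T :=
  [set w | profile u w = f].

Lemma pattern_bigcap u f : pattern u f =
  \bigcap_(i in [set: 'I_(k ^ 4)])
    r (i :: u) @^-1` [set x | in_I k (height u) x = f i].
Proof.
apply/seteqP; split=> w /=; first by move=> <- i _; rewrite ffunE.
by move=> Hw; apply/ffunP => i; rewrite ffunE; apply: Hw.
Qed.

Lemma measurable_pattern u f : measurable (pattern u f).
Proof.
rewrite pattern_bigcap; apply: fin_bigcap_measurable => [|i _].
  exact: finite_finset.
exact: measurable_funPTI (measurable_in_I _ _).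
Qed.

Lemma bad_profile u w : (size u < k)%N ->
  bad (fun e => r e w) u <-> (k ^ 2 <= #|[pred i | profile u w i]|)%N.
Proof.
move=> uk; have -> : #|[pred i | profile u w i]| =
    #|[pred i : 'I_(k ^ 4) | in_I k (height u) (r (i :: u) w)]|.
  by apply: eq_card => i; rewrite !inE ffunE.
by split=> [[]|].
Qed.

Lemma measurable_bad u : (size u < k)%N ->
  measurable [set w | bad (fun e => r e w) u].
Proof.
move=> uk; have -> : [set w | bad (fun e => r e w) u] =
    \bigcup_(f in [set f : {ffun 'I_(k ^ 4) -> bool} |
               (k ^ 2 <= #|[pred i | f i]|)%N]) pattern u f.
  apply/seteqP; split=> w /=.
    by move/(bad_profile _ _ uk) => ?; exists (profile u w).
  by move=> [f f_big w_f]; apply/(bad_profile _ _ uk); rewrite w_f.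
apply: fin_bigcup_measurable => [|f _]; first exact: finite_finset.
exact: measurable_pattern.
Qed.

(* A bad subtree only contains nodes of depth <= k, hence is given by a finite
   list of nodes: the event is a countable union of finite intersections. *)
Lemma measurable_bad_subtree :
  measurable [set w | exists S, bad_subtree (fun e => r e w) S].
Proof.
pose nodes : seq (node k) := short_words (index_enum 'I_(k ^ 4)) k.+1.
have -> : [set w | exists S, bad_subtree (fun e => r e w) S] =
    \bigcup_(s in [set s : seq (node k) | subtree_shape k (fun u => u \in s)])
      \bigcap_(u in [set u | u \in s /\ (size u < k)%N])
        [set w | bad (fun e => r e w) u].
  apply/seteqP; split=> w /=.
    move=> [S /bad_subtreeE [S_shape S_bad]].
    have eS : S = (fun u => u \in [seq u <- nodes | S u]).
      apply/funext => u; rewrite mem_filter; case Su: (S u) => //=.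
      apply/esym/mem_short_words; first by apply/allP => i _; exact: mem_index_enum.
      by case: S_shape => _ Sk _ _; rewrite ltnS Sk.
    rewrite eS in S_shape S_bad.
    by exists [seq u <- nodes | S u] => // u [su uk]; apply: S_bad.
  move=> [s s_shape s_bad]; exists (fun u => u \in s).
  by apply/bad_subtreeE; split=> // u su uk; apply: s_bad.
apply: measurable_bigcup_countable => s _.
apply: fin_bigcap_measurable => [|u [_ uk]]; last exact: measurable_bad.
by apply: sub_finite_set (finite_seq s) => u [].
Qed.

Hypotheses (hind : edges_independent r) (hunif : edges_uniform r).

Lemma prob_uniform_itv e (a b : R) : is_edge e -> 0 <= a -> a < b -> b <= 1 ->
  P (r e @^-1` [set` `]a, b[]) = (b - a)%:E.
Proof.
move=> e_edge a_ge0 ab b_le1; rewrite hunif //.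
rewrite setIidl; first by rewrite lebesgue_measure_itv /= lte_fin ab EFinB.
move=> x /=; rewrite in_itv /= => /andP[ax xb]; apply/andP; split; apply/ltW.
  exact: le_lt_trans ax.
exact: lt_le_trans xb b_le1.
Qed.

Lemma prob_in_I e h b : is_edge e -> (0 < h <= k)%N ->
  P (r e @^-1` [set x | in_I k h x = b]) =
  (if b then k%:R^-1 else 1 - k%:R^-1)%:E.
Proof.
move=> e_edge /andP[h_gt0 h_le]; have k_pos : 0 < k%:R :> R.
  by rewrite ltr0n (leq_trans h_gt0).
have window : P (r e @^-1` [set x | in_I k h x]) = (k%:R^-1)%:E.
  rewrite in_I_itv prob_uniform_itv //.
  - by congr EFin; field; rewrite gt_eqF.
  - by rewrite divr_ge0 // subr_ge0 ler1n.
  - by rewrite ltr_pM2r ?invr_gt0 // ltrBlDr ltrDl.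
  - by rewrite ler_pdivrMr // mul1r ler_nat.
case: b; first exact: window.
rewrite in_I_false -preimage_setC probability_setC ?window //.
exact: measurable_funPTI (measurable_in_I _ _).
Qed.

Lemma prob_pattern u f : (size u < k)%N ->
  P (pattern u f) = (\prod_i (if f i then k%:R^-1 else 1 - k%:R^-1))%:E.
Proof.
move=> uk; pose B (e : node k) : set R :=
  if e is i :: _ then [set x | in_I k (height u) x = f i] else setT.
have -> : pattern u f =
    \bigcap_(e in [set` [seq i :: u | i <- index_enum 'I_(k ^ 4)]]) r e @^-1` B e.
  rewrite pattern_bigcap; apply/seteqP; split=> w /= Hw.
    by move=> _ /mapP[i _ ->]; apply: Hw.
  by move=> i _; apply: (Hw (i :: u)); apply: map_f; exact: mem_index_enum.
rewrite hind.
- rewrite big_map -prodEFin; apply: eq_bigr => i _; apply: prob_in_I.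
    by rewrite /is_edge /= uk.
  by rewrite /height subn_gt0 uk leq_subr.
- by rewrite map_inj_uniq ?index_enum_uniq // => i j [].
- by apply/allP => _ /mapP[i _ ->]; rewrite /is_edge /= uk.
- by case=> [|i e] /=; [exact: measurableT | exact: measurable_in_I].
Qed.

Definition deficient (u : node k) : set T :=
  \big[setU/set0]_(f : {ffun 'I_(k ^ 4) -> bool} | (#|[pred i | f i]| < k ^ 2)%N)
    pattern u f.

Lemma measurable_deficient u : measurable (deficient u).
Proof. by apply: bigsetU_measurable => f _; exact: measurable_pattern. Qed.

Lemma prob_deficient u : (size u < k)%N ->
  (P (deficient u) <= (2 ^+ (k ^ 2) * (1 - k%:R^-1 / 2) ^+ (k ^ 4))%:E)%E.
Proof.
move=> uk; apply: le_trans (Boole_inequality_seq P _ _ _ (measurable_pattern u)) _.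
rewrite (eq_bigr _ (fun f _ => prob_pattern u f uk)) sumEFin lee_fin.
have k_gt0 : (0 < k)%N := leq_ltn_trans (leq0n _) uk.
have k_pos : 0 < k%:R :> R by rewrite ltr0n.
by apply: binomial_lower_tail; rewrite invr_ge0 ltW //= invf_le1 // ler1n.
Qed.

Definition leftmost_failure : set T :=
  \big[setU/set0]_(u <- short_words (leftmost_children k) k) deficient u.

Lemma measurable_leftmost_failure : measurable leftmost_failure.
Proof. by apply: bigsetU_measurable => u _; exact: measurable_deficient. Qed.

Lemma leftmost_failure_compl :
  ~` leftmost_failure `<=` [set w | exists S, bad_subtree (fun e => r e w) S].
Proof.
move=> w no_fail; exists (leftmost_subtree k); apply/bad_subtreeE.
split=> [|u /andP[_ small_u] uk]; first exact: leftmost_subtree_shape.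
apply/(bad_profile _ _ uk); rewrite leqNgt; apply/negP => few; apply: no_fail.
rewrite /leftmost_failure -bigcup_seq; exists u; first exact: mem_short_words.
rewrite /deficient -bigcup_seq_cond; exists (profile u w) => //=.
by rewrite mem_index_enum.
Qed.

Lemma prob_leftmost_failure : (0 < k)%N ->
  (P leftmost_failure <= (2 * k%:R ^+ (2 * k) / expR (k%:R ^+ 3 / 8))%:E)%E.
Proof.
move=> k_gt0; rewrite /leftmost_failure; set s := short_words _ _.
pose c : R := 2 ^+ (k ^ 2) * (1 - k%:R^-1 / 2) ^+ (k ^ 4).
apply: le_trans (Boole_inequality_seq P _ _ _ measurable_deficient) _.
rewrite big_seq; apply: le_trans (lee_sum (g := fun=> c%:E) s _) _.
  by move=> u /short_words_size; exact: prob_deficient.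
rewrite -big_seq sumEFin big_const_seq count_predT iter_addr_0.
rewrite -[c *+ _]mulr_natl lee_fin.
apply: le_trans (ler_wpM2l (ler0n _ _) (node_failure_bound R k k_gt0)) _.
have -> : 2 * k%:R ^+ (2 * k) / expR (k%:R ^+ 3 / 8) =
    k%:R ^+ (2 * k) * (2 * expR (- (k%:R ^+ 3 / 8))) :> R by rewrite expRN; ring.
by rewrite ler_wpM2r ?mulr_ge0 ?expR_ge0 // -natrX ler_nat size_leftmost_internal.
Qed.

End RandomTree.

Theorem mainTheorem4 (d : measure_display) (T : measurableType d)
    (R : realType) (P : probability T R) (k : nat) (hk : (0 < k)%N)
    (r : node k -> {RV P >-> R})
    (hind : edges_independent r) (hunif : edges_uniform r) :
  ((1 - 2 * (k%:R ^+ (2 * k)) / expR (k%:R ^+ 3 / 8))%:E <=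
     P [set w | exists S : node k -> bool,
                  @bad_subtree R k (fun e => r e w) S])%E.
Proof.
suff lower : ((1 - 2 * (k%:R ^+ (2 * k)) / expR (k%:R ^+ 3 / 8))%:E <=
    P (~` leftmost_failure r))%E.
  apply: le_trans lower (le_measure P _ _ (leftmost_failure_compl r)).
    by rewrite inE; apply/measurableC/measurable_leftmost_failure.
  by rewrite inE; apply: measurable_bad_subtree.
rewrite probability_setC ?EFinB; last exact: measurable_leftmost_failure.
by apply: leeB => //; exact: prob_leftmost_failure.
Qed.
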